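(* Let $p$ be an odd prime, $k\in\mathbb N$, and $n=p^a m$ with $a\in\mathbb N_0$, $m\in\mathbb N$, $p\nmid m$. Then for every $\varepsilon>0$, \[ \left|\sum_{d\mid n}\left(\frac dp\right)d^k\right|\gg_\varepsilon m^{k-\varepsilon}, \qquad \operatorname{sgn}\left(\sum_{d\mid n}\left(\frac dp\right)d^k\right)=\left(\frac mp\right). \]
   Context: $\left(\frac{\cdot}{p}\right)$ is the Legendre symbol; sums are over positive divisors; $\gg_\varepsilon$ means the inequality $\ge c_\varepsilon m^{k-\varepsilon}$ holds with a constant $c_\varepsilon>0$ depending only on $\varepsilon$. *)

From HB Require Import structures.
From mathcomp Require Import all_boot all_order all_algebra.
From mathcomp Require Import all_classical all_reals.
From mathcomp Require Import exp.
Set Implicit Arguments. Unset Strict Implicit. Unset Printing Implicit Defensive.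
Import Order.TTheory GRing.Theory Num.Theory.
Local Open Scope ring_scope.

Definition legendre (a p : nat) : int :=
  if (p %| a)%N then 0
  else if [exists x : 'I_p, ((x : nat) ^ 2 == a %[mod p])%N] then 1 else -1.

Definition legsum (p k n : nat) : int :=
  \sum_(d <- divisors n) legendre d p * (d ^ k)%:Z.

From HB Require Import structures.
From mathcomp Require Import all_boot all_order all_algebra.
From mathcomp Require Import all_classical all_reals.
From mathcomp Require Import exp.
From mathcomp Require Import finfield.
From mathcomp Require Import ring lra zify.
Set Implicit Arguments. Unset Strict Implicit. Unset Printing Implicit Defensive.
Import Order.TTheory GRing.Theory Num.Theory.
Local Open Scope ring_scope.

(* The summand d |-> (d/p) d^k is completely multiplicative, since Euler's criterion
   (d/p) = d^((p-1)/2) in F_p makes the Legendre symbol so. Hence legsum p k is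
   multiplicative, the factor p^a contributes legsum p k (p^a) = 1, and on a prime power
   q^e with q <> p it is the geometric sum of (s y)^j, j <= e, where s = (q/p) = +-1 and
   y = q^k >= 2. Such a sum has sign s^e = (q^e/p) and absolute value at least y^e/2.
   Multiplying over the prime powers of m gives sg = (m/p) and
   |legsum p k m| >= m^k / 2^omega(m); finally 2^omega(m) <= 2^N m^eps, because every
   prime q >= N = 2^(1/eps) satisfies q^eps >= 2. *)

Lemma coprime_mul_ind (P : nat -> Prop) :
  P 1%N ->
  (forall q e, prime q -> (0 < e)%N -> P (q ^ e)%N) ->
  (forall a b, coprime a b -> (0 < a)%N -> (0 < b)%N -> P a -> P b -> P (a * b)%N) ->
  forall m, (0 < m)%N -> P m.
Proof.
move=> P1 Ppow PM; elim/ltn_ind=> m IHm m_gt0.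
have [m_gt1 | m_le1] := ltnP 1 m; last by have -> : m = 1%N by lia.
have q_pr := pdiv_prime m_gt1; set q := pdiv m in q_pr *.
have [r q_r def_m] := pfactor_coprime q_pr m_gt0; set e := logn q m in def_m.
have e_gt0 : (0 < e)%N by rewrite logn_gt0 mem_primes q_pr m_gt0 pdiv_dvd.
have r_gt0 : (0 < r)%N by move: m_gt0; rewrite def_m muln_gt0 => /andP[].
have r_lt_m : (r < m)%N.
  by rewrite def_m ltn_Pmulr // -(expn0 q) ltn_exp2l ?prime_gt1.
rewrite def_m mulnC; apply: PM => //; last exact: IHm.
- by rewrite coprimeXl.
- by rewrite expn_gt0 prime_gt0.
- exact: Ppow.
Qed.

Lemma perm_primesM a b : coprime a b -> (0 < a)%N -> (0 < b)%N ->
  perm_eq (primes (a * b)) (primes a ++ primes b).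
Proof.
move=> co_ab a_gt0 b_gt0; apply: uniq_perm; rewrite ?primes_uniq //.
  by rewrite cat_uniq !primes_uniq andbT -coprime_has_primes.
by move=> q; rewrite primesM // mem_cat.
Qed.

Lemma primes_pfactor q e : prime q -> (0 < e)%N -> primes (q ^ e) = [:: q].
Proof. by move=> q_pr e_gt0; rewrite primesX // primes_prime. Qed.

Lemma coprime_dvdn_gcdM d a b : coprime a b -> (d %| a * b)%N ->
  d = (gcdn d a * gcdn d b)%N.
Proof.
move=> co_ab d_ab; apply/eqP; rewrite eqn_dvd Gauss_dvd ?dvdn_gcdl ?andbT.
  rewrite muln_gcdl !muln_gcdr !dvdn_gcd d_ab andbT.
  by rewrite dvdn_mulr // dvdn_mulr // dvdn_mull.
apply: coprime_dvdl (dvdn_gcdr _ _) _; rewrite coprime_sym.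
by apply: coprime_dvdl (dvdn_gcdr _ _) _; rewrite coprime_sym.
Qed.

Lemma perm_divisorsM a b : coprime a b -> (0 < a)%N -> (0 < b)%N ->
  perm_eq (divisors (a * b)) [seq (d1 * d2)%N | d1 <- divisors a, d2 <- divisors b].
Proof.
move=> co_ab a_gt0 b_gt0; have ab_gt0 : (0 < a * b)%N by rewrite muln_gt0 a_gt0.
have gcd_aM d1 d2 : (d1 %| a)%N -> (d2 %| b)%N -> gcdn a (d1 * d2) = d1.
  move=> d1a d2b; rewrite Gauss_gcdl ?(coprime_dvdr d2b) //; exact/gcdn_idPr.
have gcd_bM d1 d2 : (d1 %| a)%N -> (d2 %| b)%N -> gcdn b (d1 * d2) = d2.
  move=> d1a d2b; rewrite Gauss_gcdr; first exact/gcdn_idPr.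
  by rewrite (coprime_dvdr d1a) // coprime_sym.
apply: uniq_perm; first exact: divisors_uniq.
  apply: allpairs_uniq; rewrite ?divisors_uniq //.
  move=> [x1 x2] [y1 y2] /allpairsP[[u1 u2] [/= u1a u2b [-> ->]]].
  move=> /allpairsP[[v1 v2] [/= v1a v2b [-> ->]]] /= eq_uv.
  rewrite -!dvdn_divisors // in u1a u2b v1a v2b.
  have -> : u1 = v1 by rewrite -(gcd_aM u1 u2) // eq_uv gcd_aM.
  by have -> : u2 = v2 by rewrite -(gcd_bM u1 u2) // eq_uv gcd_bM.
move=> d; rewrite -dvdn_divisors //; apply/idP/allpairsP => [d_ab | ].
  exists (gcdn d a, gcdn d b); rewrite -!dvdn_divisors ?dvdn_gcdr //.
  by split => //; apply: coprime_dvdn_gcdM.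
by move=> [[d1 d2] [/= d1a d2b ->]]; rewrite dvdn_mul // dvdn_divisors.
Qed.

Lemma sum_divisorsM (R : pzSemiRingType) (F : nat -> R) a b :
  (forall x y, coprime x y -> F (x * y)%N = F x * F y) ->
  coprime a b -> (0 < a)%N -> (0 < b)%N ->
  \sum_(d <- divisors (a * b)) F d =
    (\sum_(d <- divisors a) F d) * (\sum_(d <- divisors b) F d).
Proof.
move=> FM co_ab a_gt0 b_gt0; rewrite (perm_big _ (perm_divisorsM co_ab a_gt0 b_gt0)).
rewrite big_allpairs_dep big_distrl big_seq_cond [RHS]big_seq_cond /=.
apply: eq_bigr => d1 /andP[d1a _]; rewrite big_distrr big_seq_cond [RHS]big_seq_cond.
apply: eq_bigr => d2 /andP[d2b _]; apply: FM.
rewrite -!dvdn_divisors // in d1a d2b.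
by rewrite (coprime_dvdl d1a) // (coprime_dvdr d2b).
Qed.

Lemma perm_divisors_pfactor q e : prime q ->
  perm_eq (divisors (q ^ e)) [seq (q ^ j)%N | j <- index_iota 0 e.+1].
Proof.
move=> q_pr; apply: uniq_perm; first exact: divisors_uniq.
  by rewrite map_inj_uniq ?iota_uniq //; apply: expnI (prime_gt1 q_pr).
move=> d; rewrite -dvdn_divisors ?expn_gt0 ?prime_gt0 //.
apply/(dvdn_pfactor _ _ q_pr)/mapP => [[j je ->] | [j]].
  by exists j; rewrite // mem_index_iota.
by rewrite mem_index_iota => /andP[_ je] ->; exists j.
Qed.

Lemma signed_geometric_sum_ge (R : realDomainType) (s y : R) e :
  s = 1 \/ s = -1 -> 2 <= y ->
  y ^+ e <= 2 * (s ^+ e * \sum_(j < e.+1) (s * y) ^+ j).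
Proof.
move=> [-> | ->] y_ge2.
  rewrite expr1n !mul1r big_ord_recr /=.
  have : 0 <= \sum_(j < e) y ^+ j by apply: sumr_ge0 => j _; apply: exprn_ge0; lra.
  have : 0 <= y ^+ e by apply: exprn_ge0; lra.
  lra.
set T := \sum_(j < e.+1) _; set sg := (-1) ^+ e.
have sg2 : sg * sg = 1 by rewrite -exprMn mulrNN mulr1 expr1n.
have closed : (1 + y) * (sg * T) = sg + y * y ^+ e.
  have := subrX1 (-1 * y) e.+1; rewrite -/T exprMn !exprS -/sg.
  set Y := y ^+ e => eT.
  have -> : (1 + y) * (sg * T) = - sg * ((-1 * y - 1) * T) by ring.
  by rewrite -eT; transitivity (sg + (sg * sg) * (y * Y)); [ring | rewrite sg2 mul1r].
suff : (1 + y) * y ^+ e <= (1 + y) * (2 * (sg * T)) by rewrite ler_pM2l //; lra.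
rewrite mulrCA closed.
have sg_ge : -1 <= sg by nra.
have [e0 | e_gt0] := posnP e; first by rewrite /sg e0 !expr0; lra.
have : 2 <= y ^+ e by apply: (le_trans y_ge2); apply: ler_eXnr => //; lra.
nra.
Qed.

Section Legendre.
Variable p : nat.
Hypotheses (p_pr : prime p) (p_odd : odd p).

Let p_gt2 : (2 < p)%N. Proof. exact: odd_prime_gt2. Qed.
Let half_gt0 : (0 < p./2)%N. Proof. by case: p p_gt2 => [|[|[|q]]]. Qed.
Let double_half : (p./2).*2 = p.-1. Proof. by rewrite -{2}(odd_double_half p) p_odd. Qed.

Lemma intr_Fp_inj (x y : int) : (`|x - y| < p)%N ->
  (x%:~R : 'F_p) = y%:~R -> x = y.
Proof.
move=> xy_lt /eqP; rewrite -subr_eq0 -rmorphB -(dvdz_pcharf (pchar_Fp p_pr)) => p_dvd.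
have [/eqP | xy_gt0] := posnP `|x - y|; first by rewrite absz_eq0 subr_eq0 => /eqP.
by have := dvdn_leq xy_gt0 p_dvd; lia.
Qed.

Lemma natr_Fp_inj (i j : nat) : (i < p)%N -> (j < p)%N ->
  (i%:R : 'F_p) = j%:R -> i = j.
Proof.
move=> i_lt_p j_lt_p /(intr_Fp_inj (x := i) (y := j)) eq_ij.
by apply/eqP; rewrite -eqz_nat eq_ij //; lia.
Qed.

Lemma Fp_fermat (y : 'F_p) : y != 0 -> y ^+ p.-1 = 1.
Proof.
move=> y_neq0; apply: (mulfI y_neq0); rewrite mulr1 -exprS prednK ?prime_gt0 //.
by rewrite -[in X in _ ^+ X](card_Fp p_pr) expf_card.
Qed.

Lemma uniq_Fp_squares : uniq [seq (i%:R : 'F_p) ^+ 2 | i <- iota 1 p./2].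
Proof.
rewrite map_inj_in_uniq ?iota_uniq // => i j; rewrite !mem_iota => i_in j_in.
move=> /eqP; rewrite eqf_sqr => /orP[/eqP | ]; first by apply: natr_Fp_inj; lia.
rewrite -addr_eq0 -natrD => /eqP /(natr_Fp_inj (j := 0)); lia.
Qed.

Lemma Fp_euler_criterion (a : 'F_p) : a != 0 ->
  reflect (exists y, y ^+ 2 = a) (a ^+ p./2 == 1).
Proof.
have sq_half (y : 'F_p) : y != 0 -> (y ^+ 2) ^+ p./2 = 1.
  by move=> y_neq0; rewrite -exprM mul2n double_half Fp_fermat.
move=> a_neq0; apply: (iffP idP) => [a_half | [y def_a]]; last first.
  by rewrite -def_a sq_half //; apply: contraNneq a_neq0 => y0; rewrite -def_a y0 expr0n.
case/boolP: [exists y, y ^+ 2 == a] => [/existsP[y /eqP] | /existsPn no_sqrt].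
  by exists y.
have Xh1_neq0 : 'X^(p./2) - 1 != 0 :> {poly 'F_p}.
  by rewrite -size_poly_eq0 size_XnsubC.
have root_Xh1 x : x ^+ p./2 = 1 -> root ('X^(p./2) - 1) x.
  by move=> xh; rewrite rootE !(hornerE, hornerXn) xh subrr.
(* Otherwise a, 1^2, ..., (p./2)^2 are p./2 + 1 distinct roots of 'X^(p./2) - 1. *)
have := max_poly_roots (rs := a :: [seq (i%:R : 'F_p) ^+ 2 | i <- iota 1 p./2]) Xh1_neq0.
rewrite size_XnsubC // /= size_map size_iota ltnn uniq_Fp_squares andbT.
rewrite root_Xh1 ?(eqP a_half) //=.
move=> too_many_roots; suff : false by []; apply: too_many_roots.
- apply/allP => x /mapP[i]; rewrite mem_iota => i_in ->; apply/root_Xh1/sq_half.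
  by apply/eqP => /(natr_Fp_inj (j := 0)); lia.
- by apply/mapP => -[i _ def_a]; have := no_sqrt i%:R; rewrite -def_a eqxx.
Qed.

Lemma Fp_sqr_natP (a : nat) :
  reflect (exists y : 'F_p, y ^+ 2 = a%:R) [exists x : 'I_p, (x ^ 2 == a %[mod p])%N].
Proof.
apply: (iffP existsP) => [[x /eqP x2_a] | [y y2_a]].
  by exists x%:R; rewrite -natrX -Fp_nat_mod // x2_a Fp_nat_mod.
have y_lt_p : (y < p)%N by have := ltn_ord y; rewrite [X in (_ < X)%N -> _](Fp_cast p_pr).
by exists (Ordinal y_lt_p); rewrite /= -!(val_Fp_nat p_pr) natrX -y2_a natr_Zp.
Qed.

Lemma legendre_Fp a : (legendre a p)%:~R = (a%:R : 'F_p) ^+ p./2.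
Proof.
rewrite /legendre (dvdn_pcharf (pchar_Fp p_pr)); have [-> | a_neq0] := eqVneq.
  by rewrite expr0n gtn_eqF.
have [/(Fp_euler_criterion a_neq0)/eqP -> // | not_sqr] := Fp_sqr_natP.
have : (a%:R ^+ p./2) ^+ 2 = 1 :> 'F_p by rewrite -exprM muln2 double_half Fp_fermat.
move/eqP; rewrite sqrf_eq1 => /orP[a_half | /eqP -> //].
by case: not_sqr; apply/(Fp_euler_criterion a_neq0).
Qed.

Lemma legendre_abs_le1 a : (`|legendre a p| <= 1)%N.
Proof. by rewrite /legendre; case: ifP => // _; case: ifP. Qed.

Lemma legendre_Fp_eq a (x : int) : (`|x| <= 1)%N ->
  x%:~R = (a%:R : 'F_p) ^+ p./2 -> legendre a p = x.
Proof.
move=> x_le1 x_half; apply: intr_Fp_inj; last by rewrite legendre_Fp.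
have := legendre_abs_le1 a; lia.
Qed.

Lemma legendre1 : legendre 1 p = 1.
Proof. by apply: legendre_Fp_eq; rewrite ?expr1n. Qed.

Lemma legendreM a b : legendre (a * b) p = legendre a p * legendre b p.
Proof.
apply: legendre_Fp_eq; last by rewrite rmorphM /= !legendre_Fp natrM exprMn.
by rewrite abszM; have := legendre_abs_le1 a; have := legendre_abs_le1 b; nia.
Qed.

Lemma legendreX a e : legendre (a ^ e) p = legendre a p ^+ e.
Proof.
elim: e => [|e IHe]; first by rewrite expn0 legendre1.
by rewrite expnS legendreM IHe exprS.
Qed.

Lemma legendre_dvd a : (p %| a)%N -> legendre a p = 0.
Proof. by rewrite /legendre => ->. Qed.

Lemma legendre_coprime a : ~~ (p %| a)%N -> legendre a p = 1 \/ legendre a p = -1.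
Proof. by rewrite /legendre => /negbTE ->; case: ifP; [left | right]. Qed.

End Legendre.

Section LegendreDivisorSum.
Variables p k : nat.
Hypotheses (p_pr : prime p) (p_odd : odd p).

Lemma legsum1 : legsum p k 1 = 1.
Proof. by rewrite /legsum (_ : divisors 1 = [:: 1%N]) // big_seq1 legendre1 // exp1n. Qed.

Lemma legsumM a b : coprime a b -> (0 < a)%N -> (0 < b)%N ->
  legsum p k (a * b) = legsum p k a * legsum p k b.
Proof.
apply: sum_divisorsM => x y _.
by rewrite legendreM // expnMn PoszM mulrACA.
Qed.

Lemma legsum_pfactor q e : prime q ->
  legsum p k (q ^ e) = \sum_(j < e.+1) (legendre q p * (q ^ k)%:Z) ^+ j.
Proof.
move=> q_pr; rewrite /legsum (perm_big _ (perm_divisors_pfactor e q_pr)) big_map big_mkord.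
by apply: eq_bigr => j _; rewrite legendreX // exprMn expnAC -natz natrX natz.
Qed.

Lemma legsum_pfactorM a m : (0 < m)%N -> ~~ (p %| m)%N ->
  legsum p k (p ^ a * m) = legsum p k m.
Proof.
move=> m_gt0 p_m; rewrite legsumM ?coprimeXl ?prime_coprime ?expn_gt0 ?(prime_gt0 p_pr) //.
rewrite legsum_pfactor // legendre_dvd // mul0r big_ord_recl expr0 big1 ?addr0 ?mul1r //.
by move=> j _; rewrite expr0n.
Qed.

Hypothesis k_gt0 : (0 < k)%N.

Lemma legsum_pfactor_sg_norm q e : prime q -> ~~ (p %| q)%N ->
  Num.sg (legsum p k (q ^ e)) = legendre (q ^ e) p /\
  ((q ^ e) ^ k)%:Z <= 2 * `|legsum p k (q ^ e)|.
Proof.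
move=> q_pr p_q; rewrite legsum_pfactor // legendreX // expnAC.
set s := legendre q p; set T := \sum_(j < e.+1) _.
have qk_ge2 : 2 <= (q ^ k)%:Z.
  rewrite lez_nat (leq_trans (prime_gt1 q_pr)) //.
  by rewrite -{1}(expn1 q) leq_pexp2l ?(prime_gt0 q_pr).
have s_pm1 : s = 1 \/ s = -1 by apply: legendre_coprime.
have se2 : s ^+ e * s ^+ e = 1.
  by rewrite -exprMn; case: s_pm1 => ->; rewrite ?mulrNN mulr1 expr1n.
have key := signed_geometric_sum_ge e s_pm1 qk_ge2; rewrite -/T in key.
have qke_gt0 : 0 < (q ^ k)%:Z ^+ e by rewrite exprn_gt0 //; lia.
have U_gt0 : 0 < s ^+ e * T by lra.
have def_T : T = s ^+ e * (s ^+ e * T) by rewrite mulrA se2 mul1r.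
rewrite def_T sgrM normrM (gtr0_sg U_gt0) (gtr0_norm U_gt0) mulr1.
have sg_s : Num.sg s = s by case: s_pm1 => ->; rewrite ?sgr1 ?sgrN1.
have norm_s : `|s| = 1 by case: s_pm1 => ->; rewrite ?normrN normr1.
split; first by rewrite sgrX sg_s.
by rewrite normrX norm_s expr1n mul1r -natz natrX natz.
Qed.

Lemma sg_legsum m : (0 < m)%N -> ~~ (p %| m)%N -> Num.sg (legsum p k m) = legendre m p.
Proof.
move: m; apply: coprime_mul_ind => [_ | q e q_pr e_gt0 p_qe | a b co_ab a_gt0 b_gt0 IHa IHb].
- by rewrite legsum1 legendre1 // sgr1.
- have p_q : ~~ (p %| q)%N by apply: contra p_qe => /dvdn_trans; apply; rewrite dvdn_exp.
  by have [] := legsum_pfactor_sg_norm e q_pr p_q.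
- rewrite Euclid_dvdM // negb_or => /andP[p_a p_b].
  by rewrite legsumM // sgrM IHa // IHb // legendreM.
Qed.

Lemma legsum_norm_ge m : (0 < m)%N -> ~~ (p %| m)%N ->
  (m ^ k)%:Z <= 2 ^+ size (primes m) * `|legsum p k m|.
Proof.
move: m; apply: coprime_mul_ind => [_ | q e q_pr e_gt0 p_qe | a b co_ab a_gt0 b_gt0 IHa IHb].
- by rewrite legsum1 exp1n.
- have p_q : ~~ (p %| q)%N by apply: contra p_qe => /dvdn_trans; apply; rewrite dvdn_exp.
  by rewrite primes_pfactor //; have [] := legsum_pfactor_sg_norm e q_pr p_q.
- rewrite Euclid_dvdM // negb_or => /andP[p_a p_b].
  rewrite legsumM // expnMn PoszM (perm_size (perm_primesM co_ab a_gt0 b_gt0)) size_cat.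
  by rewrite exprD normrM mulrACA ler_pM ?IHa ?IHb.
Qed.

End LegendreDivisorSum.

Lemma count_primes_ltn_le N m : (count (fun q => q < N)%N (primes m) <= N)%N.
Proof.
rewrite -size_filter -[X in (_ <= X)%N](size_iota 0 N).
apply: uniq_leq_size; first by rewrite filter_uniq ?primes_uniq.
by move=> q; rewrite mem_filter mem_iota => /andP[].
Qed.

Lemma exp2_size_primes_le (R : realType) (eps : R) : 0 < eps ->
  exists N : nat, forall m, (0 < m)%N ->
    2 ^+ size (primes m) <= 2 ^+ N * m%:R `^ eps.
Proof.
move=> eps_gt0; pose N := (Num.truncn ((2 : R) `^ eps^-1)).+1; exists N.
have large_pow_ge2 q : (N <= q)%N -> 2 <= (q%:R : R) `^ eps.
  move=> N_le_q; have : (2 : R) `^ eps^-1 <= q%:R.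
    by apply: le_trans (ltW (truncnS_gt _)) _; rewrite ler_nat.
  move=> /(@ge0_ler_powR _ eps (ltW eps_gt0)); rewrite -powRrM mulVf ?gt_eqF // powRr1 //.
  by apply; rewrite ?nnegrE ?powR_ge0 ?ler0n.
have pow_ge1 n : (0 < n)%N -> 1 <= (n%:R : R) `^ eps.
  by move=> n_gt0; rewrite -[leLHS](powRr0 n%:R); apply: ler_powR; rewrite ?ler1n // ltW.
have small_primes_bound : forall m, (0 < m)%N ->
    2 ^+ size (primes m) <= 2 ^+ count (fun q => (q < N)%N) (primes m) * (m%:R : R) `^ eps.
  apply: coprime_mul_ind => [ | q e q_pr e_gt0 | a b co_ab a_gt0 b_gt0 IHa IHb].
  - by rewrite powR1 mulr1.
  - rewrite primes_pfactor //= addn0 expr1; have [q_lt_N | N_le_q] := ltnP q N.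
      by rewrite expr1 ler_peMr // pow_ge1 // expn_gt0 prime_gt0.
    rewrite expr0 mul1r (le_trans (large_pow_ge2 q N_le_q)) //.
    apply: ge0_ler_powR; rewrite ?nnegrE ?ler0n ?(ltW eps_gt0) // ler_nat.
    by rewrite -{1}(expn1 q) leq_pexp2l ?(prime_gt0 q_pr).
  - have primes_ab := perm_primesM co_ab a_gt0 b_gt0.
    rewrite (perm_size primes_ab) (permP primes_ab).
    rewrite size_cat count_cat !exprD natrM powRM ?ler0n // mulrACA.
    by rewrite ler_pM ?exprn_ge0.
move=> m m_gt0; apply: (le_trans (small_primes_bound m m_gt0)).
by rewrite ler_wpM2r ?powR_ge0 // ler_eXn2l ?ltr1n // count_primes_ltn_le.
Qed.

Lemma legsum_norm_ge_powR (R : realType) (eps : R) : 0 < eps ->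
  exists c : R, 0 < c /\
    forall p k m, prime p -> odd p -> (0 < k)%N -> (0 < m)%N -> ~~ (p %| m)%N ->
      c * m%:R `^ (k%:R - eps) <= `|(legsum p k m)%:~R|.
Proof.
move=> eps_gt0; have [N omega_le] := exp2_size_primes_le eps_gt0.
exists (2 ^- N); split => [|p k m p_pr p_odd k_gt0 m_gt0 p_m].
  by rewrite invr_gt0 exprn_gt0.
have m_pos : 0 < m%:R :> R by rewrite ltr0n.
have legsum_ge : (m%:R : R) ^+ k <= 2 ^+ size (primes m) * `|(legsum p k m)%:~R|.
  have := legsum_norm_ge p_pr p_odd k_gt0 m_gt0 p_m.
  by rewrite -(ler_int R) intrM intr_norm !rmorphXn; apply.
rewrite powRB ?(gt_eqF m_pos) ?implybT // powR_mulrn ?(ltW m_pos) //.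
rewrite ler_pdivrMl ?exprn_gt0 //.
rewrite ler_pdivrMr ?powR_gt0 // (le_trans legsum_ge) // mulrAC ler_wpM2r //.
exact: omega_le.
Qed.

Theorem lemma7p1 (R : realType) :
  (forall eps : R, 0 < eps ->
     exists c : R, 0 < c /\
       forall p k a m : nat,
         prime p -> odd p -> (0 < k)%N -> (0 < m)%N -> ~~ (p %| m)%N ->
         c * ((m%:R : R) `^ (k%:R - eps)) <= `|(legsum p k (p ^ a * m)%N)%:~R : R|)
  /\
  (forall p k a m : nat,
     prime p -> odd p -> (0 < k)%N -> (0 < m)%N -> ~~ (p %| m)%N ->
     Num.sg (legsum p k (p ^ a * m)%N) = legendre m p).
Proof.
split => [eps eps_gt0 | p k a m p_pr p_odd k_gt0 m_gt0 p_m].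
  have [c [c_gt0 c_le]] := legsum_norm_ge_powR eps_gt0.
  exists c; split => // p k a m p_pr p_odd k_gt0 m_gt0 p_m.
  by rewrite legsum_pfactorM //; apply: c_le.
by rewrite legsum_pfactorM // sg_legsum.
Qed.
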